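(* Let $\beta\in[\tfrac12,1)$. If $\lambda$ is an eigenvalue of $\Delta_\beta$, then $\lambda$ is not a principal eigenvalue; that is, $\Delta_\beta$ has no principal eigenvalue.
   Context: Tree: for an integer $m\ge2$, the regular $m$-branching tree $\mathbb{T}_m$ has as vertices the root $\emptyset$ and all finite sequences $(\emptyset,a_1,\dots,a_k)$, $k\in\mathbb{N}$, $a_i\in\{0,\dots,m-1\}$. The level of $x=(\emptyset,a_1,\dots,a_k)$ is $|x|=k$ ($|\emptyset|=0$). The successors of $x$ are $(x,i)$; for $x\ne\emptyset$, $\hat x$ denotes its immediate predecessor. A branch is an infinite sequence $(x_n)_{n\ge0}$ with $x_0=\emptyset$ and $x_{n+1}$ a successor of $x_n$; $\partial\mathbb{T}_m$ is the set of branches. For $y=(x_n)\in\partial\mathbb{T}_m$, $\lim_{x\to y}u(x)=L$ means $\lim_{n\to\infty}u(x_n)=L$. Operator: for $\beta\in[0,1)$ let $p_\beta=1$ if $\beta=0$ and $p_\beta=\beta/(1-\beta)$ if $\beta\in(0,1)$. $\Delta_\beta u(\emptyset)=\frac1m\sum_{i=0}^{m-1}u(\emptyset,i)-u(\emptyset)$ and, for $x\ne\emptyset$, $\Delta_\beta u(x)=\big(\beta u(\hat x)+\frac{1-\beta}{m}\sum_{i=0}^{m-1}u(x,i)-u(x)\big)p_\beta^{-|x|}$. Eigenvalues: $\lambda\in\mathbb{R}$ is an eigenvalue of $\Delta_\beta$ if there is a bounded $u:\mathbb{T}_m\to\mathbb{R}$, $u\not\equiv0$, with $-\Delta_\beta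 u=\lambda u$ on $\mathbb{T}_m$ and $\lim_{x\to y}u(x)=0$ for every $y\in\partial\mathbb{T}_m$. An eigenvalue $\lambda>0$ is principal if it has a non-negative eigenfunction. *)

From HB Require Import structures.
From mathcomp Require Import all_boot all_order all_algebra.
From mathcomp Require Import all_classical all_reals topology normedtype sequences.

Import Order.TTheory GRing.Theory Num.Theory.
Import numFieldNormedType.Exports.
Local Open Scope classical_set_scope.
Local Open Scope ring_scope.

(* Vertices of the m-branching tree T_m: the vertex (root, a_1, ..., a_k) is
   encoded by the REVERSED list [:: a_k; ...; a_1] of digits in 'I_m.
   Root = [::]; successor (x,i) = i :: x; predecessor of x <> root = behead x;
   level |x| = size x. *)
Definition vertex (m : nat) := seq 'I_m.

(* Branches are in bijection with infinite digit sequences b : nat -> 'I_m;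
   the n-th vertex of the branch is (root, b 0, ..., b (n-1)). *)
Fixpoint branch_vertex {m : nat} (b : nat -> 'I_m) (n : nat) : vertex m :=
  match n with
  | 0 => [::]
  | n'.+1 => b n' :: branch_vertex b n'
  end.

Definition pbeta {R : realType} (beta : R) : R :=
  if beta == 0 then 1 else beta / (1 - beta).

Definition Delta_beta {R : realType} {m : nat} (beta : R)
  (u : vertex m -> R) (x : vertex m) : R :=
  match x with
  | [::] => (m%:R)^-1 * (\sum_(i < m) u [:: i]) - u [::]
  | _ :: xh => (beta * u xh + (1 - beta) / m%:R * (\sum_(i < m) u (i :: x)) - u x)
               * ((pbeta beta) ^+ size x)^-1
  end.

Definition eigenfunction {R : realType} (m : nat) (beta lam : R)
  (u : vertex m -> R) : Prop :=
  (exists M : R, forall x, `|u x| <= M) /\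
  (exists x, u x != 0) /\
  (forall x, - Delta_beta beta u x = lam * u x) /\
  (forall b : nat -> 'I_m, (fun n => u (branch_vertex b n)) @ \oo --> (0 : R)).

Definition is_eigenvalue {R : realType} (m : nat) (beta lam : R) : Prop :=
  exists u : vertex m -> R, eigenfunction m beta lam u.

Definition is_principal_eigenvalue {R : realType} (m : nat) (beta lam : R) : Prop :=
  0 < lam /\
  exists u : vertex m -> R, eigenfunction m beta lam u /\ (forall x, 0 <= u x).

From HB Require Import structures.
From mathcomp Require Import all_boot all_order all_algebra.
From mathcomp Require Import all_classical all_reals topology normedtype sequences.
From mathcomp Require Import ring lra.
Import Order.TTheory GRing.Theory Num.Theory.
Import numFieldNormedType.Exports.
Local Open Scope ring_scope.

(* Away from the root, with
   p = pbeta beta, the equation reads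
     beta u(x^) + (1 - beta) mean_i u(x,i) = (1 - lam p^|x|) u(x).
   If beta > 1/2 then p > 1, so the right-hand side is negative at deep
   vertices while the left-hand side is positive.  If beta = 1/2 then p = 1;
   following a child of minimal value from the root gives positive values
   a_n with a_(n+1) + a_(n-1) <= 2 (1 - lam) a_n and a_1 <= (1 - lam) a_0, and
   then a_(n+1) <= (1 - lam - 2 n lam) a_n, which is eventually negative. *)

Lemma expr_unbounded {R : realType} (p M : R) : 1 < p -> exists n, M < p ^+ n.
Proof.
move=> p_gt1; have p_gt0 : 0 < p by lra.
have M1_gt0 : 0 < Num.max 1 M by rewrite lt_max ltr01.
have eps_gt0 : 0 < (Num.max 1 M)^-1 by rewrite invr_gt0.
have invp_lt1 : `|p^-1| < 1 by rewrite ger0_norm ?invr_ge0 ?ltW // invf_lt1.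
have [N _ /(_ N (leqnn N))] := cvgr0_norm_lt _ (cvg_expr invp_lt1) _ eps_gt0.
rewrite /= exprVn normfV ger0_norm ?exprn_ge0 ?ltW //.
rewrite ltf_pV2 ?posrE ?exprn_gt0 // => lt_M1.
by exists N; apply: le_lt_trans lt_M1; rewrite le_max lexx orbT.
Qed.

Lemma exists_le_mean {R : realFieldType} {m : nat} (f : 'I_m -> R) :
  (0 < m)%N -> exists j, f j <= m%:R^-1 * \sum_(i < m) f i.
Proof.
case: m f => // m f _.
have [j _ j_min] := arg_minP f (isT : xpredT ord0).
exists j; rewrite ler_pdivlMl ?ltr0Sn //.
have -> : m.+1%:R * f j = \sum_(i < m.+1) f j by rewrite sumr_const card_ord mulr_natl.
by apply: ler_sum => i _; apply: j_min.
Qed.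

Lemma descent_step {R : realFieldType} {lam t a b c : R} :
  0 < a -> 0 < b -> b <= t * a -> c <= 2 * (1 - lam) * b - a ->
  c <= (t - 2 * lam) * b.
Proof.
move=> a_gt0 b_gt0 b_le c_le.
have t_gt0 : 0 < t by rewrite -(pmulr_lgt0 _ a_gt0); apply: lt_le_trans b_le.
suff : (2 - t) * b <= a by lra.
have sq_ge0 : 0 <= (1 - t) ^+ 2 * b by rewrite mulr_ge0 ?sqr_ge0 ?ltW.
rewrite -(ler_pM2l t_gt0); nra.
Qed.

Lemma pbeta_gt0 {R : realType} {beta : R} : 0 <= beta -> beta < 1 -> 0 < pbeta beta.
Proof.
move=> beta_ge0 beta_lt1; rewrite /pbeta; case: eqP => [//|/eqP beta_neq0].
by rewrite divr_gt0 ?subr_gt0 // lt_def beta_neq0.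
Qed.

Lemma pbeta_gt1 {R : realType} {beta : R} : 2^-1 < beta -> beta < 1 -> 1 < pbeta beta.
Proof.
move=> beta_gt beta_lt1; rewrite /pbeta gt_eqF; last by lra.
by rewrite ltr_pdivlMr ?subr_gt0 //; lra.
Qed.

Lemma pbeta_half {R : realType} : pbeta (2^-1 : R) = 1.
Proof. by rewrite /pbeta gt_eqF ?invr_gt0 ?ltr0n //; field. Qed.

Section EigenEquation.
Context {R : realType} {m : nat} {beta lam : R} {u : vertex m -> R}.
Hypotheses (beta_gt0 : 0 < beta) (beta_lt1 : beta < 1).
Hypothesis u_eigen : forall x, - Delta_beta beta u x = lam * u x.
Hypothesis m_gt0 : (0 < m)%N.

Lemma eigen_root : m%:R^-1 * \sum_(i < m) u [:: i] = (1 - lam) * u [::].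
Proof. by have := u_eigen [::]; rewrite /Delta_beta => eq_u; lra. Qed.

Lemma eigen_cons i x :
  beta * u x + (1 - beta) / m%:R * \sum_(j < m) u [:: j, i & x]
  = (1 - lam * pbeta beta ^+ (size x).+1) * u (i :: x).
Proof.
have p_neq0 : pbeta beta ^+ (size x).+1 != 0.
  by rewrite expf_neq0 // gt_eqF // pbeta_gt0 ?ltW.
have := u_eigen (i :: x); rewrite /Delta_beta /= -mulNr.
by move=> /(congr1 ( *%R^~ (pbeta beta ^+ (size x).+1))); rewrite mulfVK //; lra.
Qed.

Section NonNegative.
Hypothesis u_ge0 : forall x, 0 <= u x.

Lemma eigen_cons_eq0 i x :
  u (i :: x) = 0 -> u x = 0 /\ forall j, u [:: j, i & x] = 0.
Proof.
move=> u_ix0; have /eqP := eigen_cons i x.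
have c_gt0 : 0 < (1 - beta) / m%:R by rewrite divr_gt0 ?subr_gt0 ?ltr0n.
have sum_ge0 : 0 <= \sum_(j < m) u [:: j, i & x] by apply: sumr_ge0 => j _.
rewrite u_ix0 mulr0.
rewrite (paddr_eq0 (mulr_ge0 (ltW beta_gt0) (u_ge0 x)) (mulr_ge0 (ltW c_gt0) sum_ge0)).
rewrite mulf_eq0 (gt_eqF beta_gt0) mulf_eq0 (gt_eqF c_gt0) /=.
by move=> /andP[/eqP ux0 /eqP /psumr_eq0P sum0]; split=> // j; apply: sum0.
Qed.

Lemma eigen_root_eq0 : u [::] = 0 -> forall j, u [:: j] = 0.
Proof.
move=> u_root0; have /eqP := eigen_root; rewrite u_root0 mulr0.
rewrite mulf_eq0 invr_eq0 pnatr_eq0 eqn0Ngt m_gt0 /= => /eqP /psumr_eq0P sum0 j.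
exact: sum0.
Qed.

Lemma eigen_ge0_gt0 : (exists x, u x != 0) -> forall x, 0 < u x.
Proof.
move=> [x0 ux0_neq0] x; rewrite lt_def u_ge0 andbT; apply/eqP => ux0.
have u_root0 : u [::] = 0.
  by elim: x ux0 => [//|i x IH] /eigen_cons_eq0 [/IH].
suff u0 : forall y, u y = 0 by rewrite u0 eqxx in ux0_neq0.
elim=> [//|j [|i y] IH]; first exact: eigen_root_eq0.
by have [_ ->] := eigen_cons_eq0 i y IH.
Qed.

End NonNegative.

Section Positive.
Hypotheses (lam_gt0 : 0 < lam) (u_gt0 : forall x, 0 < u x).

Lemma beta_le_half : beta <= 2^-1.
Proof.
rewrite leNgt; apply/negP => beta_gt.
have [n lam_pn_gt1] : exists n, 1 < lam * pbeta beta ^+ n.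
  have [n lt_n] := expr_unbounded _ lam^-1 (pbeta_gt1 beta_gt beta_lt1).
  by exists n; rewrite -ltr_pdivrMl // mulr1.
pose o := Ordinal m_gt0.
have p_ge1 : 1 <= pbeta beta by rewrite ltW // pbeta_gt1.
have rhs_le0 : (1 - lam * pbeta beta ^+ n.+1) * u (o :: nseq n o) <= 0.
  apply: mulr_le0_ge0; last exact: ltW.
  rewrite subr_le0 (le_trans (ltW lam_pn_gt1)) //.
  by rewrite ler_pM2l // ler_weXn2l.
have lhs_gt0 : 0 < beta * u (nseq n o)
                   + (1 - beta) / m%:R * \sum_(j < m) u [:: j, o & nseq n o].
  apply: ltr_pwDl; first exact: mulr_gt0.
  apply: mulr_ge0; first by rewrite divr_ge0 ?subr_ge0 ?ler0n ?ltW.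
  by apply: sumr_ge0 => j _; apply: ltW.
by move: lhs_gt0 rhs_le0; rewrite eigen_cons size_nseq; lra.
Qed.

Lemma beta_neq_half : beta != 2^-1.
Proof.
apply/eqP => beta_half.
have step i x : exists j, u [:: j, i & x] <= 2 * (1 - lam) * u (i :: x) - u x.
  have [j le_j] := exists_le_mean (fun j => u [:: j, i & x]) m_gt0.
  exists j; have := eigen_cons i x.
  by rewrite beta_half pbeta_half expr1n mulr1 -mulrA; lra.
have descent n : exists i x, u (i :: x) <= (1 - lam - 2 * lam * n%:R) * u x.
  elim: n => [|n [i [x IH]]].
    have [j le_j] := exists_le_mean (fun j => u [:: j]) m_gt0.
    by exists j, [::]; rewrite mulr0 subr0 -eigen_root.
  have [j le_j] := step i x; exists j, (i :: x).
  have -> : 1 - lam - 2 * lam * n.+1%:R = 1 - lam - 2 * lam * n%:R - 2 * lam.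
    by rewrite mulrSr; ring.
  exact: descent_step (u_gt0 x) (u_gt0 (i :: x)) IH le_j.
have [n lam_n_gt1] : exists n : nat, 1 < lam * n%:R.
  exists (Num.Def.archi_bound lam^-1).
  by rewrite -ltr_pdivrMl // mulr1 archi_boundP // invr_ge0 ltW.
have [i [x le_u]] := descent n.
(* lra does not see section hypotheses, hence the explicit [move:]. *)
have coef_lt0 : 1 - lam - 2 * lam * n%:R < 0 by move: lam_gt0; lra.
have : (1 - lam - 2 * lam * n%:R) * u x < 0 by rewrite pmulr_llt0.
by move: (u_gt0 (i :: x)); lra.
Qed.

Lemma beta_lt_half : beta < 2^-1.
Proof. by rewrite lt_neqAle beta_neq_half beta_le_half. Qed.

End Positive.
End EigenEquation.

Theorem theorem1p4 (R : realType) (m : nat) (hm : (2 <= m)%N) (beta : R)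
  (hb1 : 2^-1 <= beta) (hb2 : beta < 1) (lam : R) :
  is_eigenvalue m beta lam -> ~ is_principal_eigenvalue m beta lam.
Proof.
move=> _ [lam_gt0 [u [[_ [u_neq0 [u_eigen _]]] u_ge0]]].
have beta_gt0 : 0 < beta by lra.
have m_gt0 : (0 < m)%N by apply: leq_trans hm.
have u_gt0 := eigen_ge0_gt0 beta_gt0 hb2 u_eigen m_gt0 u_ge0 u_neq0.
have := beta_lt_half beta_gt0 hb2 u_eigen m_gt0 lam_gt0 u_gt0.
lra.
Qed.
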